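(* For every integer $d\geqslant 1$ and every real $x>0$, $$Q_d(x)=\vartheta(d)\sqrt x+O(d^2),$$ with an absolute implied constant. Here $$\vartheta(d)=\frac{32d^2}{5}\sqrt d-\frac{48d^2+16d-2}{15}\sqrt{d+1}-\frac{48d^2-16d-2}{15}\sqrt{d-1}.$$
   Context: For real $t$, $\lfloor t\rfloor$ is the integer part and $\{t\}=t-\lfloor t\rfloor$ the fractional part. For an integer $d\geqslant 0$ and real $x>0$, $$Q_d(x)=\sum_{n\geqslant 1}\big[\lfloor x/n\rfloor-\lfloor x/(n+1)\rfloor=d\big]\cdot\big(\{x/n\}-\{x/(n+1)\}\big)^2,$$ where $[P]$ equals $1$ if the proposition $P$ is true and $0$ otherwise. *)

From Stdlib Require Import Reals ZArith.
From Coquelicot Require Import Coquelicot.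
Open Scope R_scope.

(* Stdlib's Int_part r = up r - 1 is the floor of r; frac_part r = r - Int_part r. *)

Definition Qterm (d : nat) (x : R) (n : nat) : R :=
  if Z.eqb (Int_part (x / INR n) - Int_part (x / INR (S n)))%Z (Z.of_nat d)
  then (frac_part (x / INR n) - frac_part (x / INR (S n))) ^ 2
  else 0.

(* Q_d(x) = sum_{n >= 1} Qterm d x n  (series indexed from n = 1). *)
Definition Q (d : nat) (x : R) : R := Series (fun k : nat => Qterm d x (S k)).

Definition vartheta (d : nat) : R :=
  let t := INR d in
  32 * t ^ 2 / 5 * sqrt t
  - (48 * t ^ 2 + 16 * t - 2) / 15 * sqrt (t + 1)
  - (48 * t ^ 2 - 16 * t - 2) / 15 * sqrt (t - 1).

From Stdlib Require Import Reals Lra Lia ZArith.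
From Coquelicot Require Import Coquelicot.
Open Scope R_scope.

(* Put s_n = x/n - x/(n+1) - d and t_n = {x/n} - {x/(n+1)}, so that t_n lies in (-1, 1)
   and s_n - t_n is the integer floor(x/n) - floor(x/(n+1)) - d.  Then the n-th term of Q_d(x) is
   h(s_n) + g(s_n) t_n, where h(s) = s^2 - |s|^3 on [-1, 1] and 0 elsewhere, and
   g(s) = s|s| on (-1, 1) and 0 elsewhere.  As g is a difference of two bounded monotone
   functions and s_n decreases, summation by parts bounds the sum of the g(s_n) t_n by a
   constant.  Since h is 1-Lipschitz, h(s_n) differs from the integral of h(x/z^2 - d)
   over [n, n+1] by at most x/n^2 - x/(n+1)^2, and only the n with x/(n+1)^2 <= d + 1
   contribute, so these errors telescope to O(d).  Finally the integral of h(x/z^2 - d)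
   over z >= 1 is elementary: splitting at z = sqrt(x/(d+1)), sqrt(x/d), sqrt(x/(d-1))
   it equals vartheta(d) sqrt x up to O(1). *)

(** * Decomposition of the summand *)

Definition clamp (s : R) : R := Rmax (-1) (Rmin 1 s).

Lemma clamp_bounds s : -1 <= clamp s <= 1.
Proof. unfold clamp, Rmax, Rmin; repeat destruct Rle_dec; lra. Qed.

Lemma clamp_id s : -1 <= s <= 1 -> clamp s = s.
Proof. intros; unfold clamp, Rmax, Rmin; repeat destruct Rle_dec; lra. Qed.

Lemma clamp_le a b : a <= b -> clamp a <= clamp b.
Proof. intros; unfold clamp, Rmax, Rmin; repeat destruct Rle_dec; lra. Qed.

Lemma clamp_lip a b : Rabs (clamp a - clamp b) <= Rabs (a - b).
Proof.
  unfold clamp, Rmax, Rmin; repeat destruct Rle_dec;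
  apply Rabs_le_between; unfold Rabs; destruct Rcase_abs; lra.
Qed.

Lemma clamp_out s : 1 <= Rabs s -> clamp s = 1 /\ 1 <= s \/ clamp s = -1 /\ s <= -1.
Proof.
  intros; unfold clamp, Rmax, Rmin in *; revert H;
  unfold Rabs; destruct Rcase_abs; repeat destruct Rle_dec; intros; lra.
Qed.

Definition bump (s : R) : R := let t := Rabs (clamp s) in t ^ 2 - t ^ 3.

Lemma bump_in s : -1 <= s <= 1 -> bump s = s ^ 2 - Rabs s ^ 3.
Proof. intros; unfold bump; rewrite clamp_id by lra; cbv zeta; rewrite pow2_abs; ring. Qed.

Lemma bump_pos s : 0 <= s <= 1 -> bump s = s ^ 2 - s ^ 3.
Proof. intros; rewrite bump_in, Rabs_pos_eq by lra; ring. Qed.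

Lemma bump_neg s : -1 <= s <= 0 -> bump s = s ^ 2 + s ^ 3.
Proof. intros; rewrite bump_in, Rabs_left1 by lra; ring. Qed.

Lemma bump_out s : 1 <= Rabs s -> bump s = 0.
Proof.
  intros Hs; unfold bump.
  destruct (clamp_out s Hs) as [[-> _]|[-> _]]; cbv zeta; rewrite ?Rabs_R1, ?Rabs_m1; ring.
Qed.

Lemma bump_abs_le s : Rabs (bump s) <= 1.
Proof.
  unfold bump; cbv zeta; pose proof (clamp_bounds s).
  assert (0 <= Rabs (clamp s) <= 1) by (split; [apply Rabs_pos | apply Rabs_le; lra]).
  apply Rabs_le; nra.
Qed.

Lemma bump_lip a b : Rabs (bump a - bump b) <= Rabs (a - b).
Proof.
  unfold bump; cbv zeta.
  assert (Hrange : forall s, 0 <= Rabs (clamp s) <= 1).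
  { intros s; pose proof (clamp_bounds s); split; [apply Rabs_pos | apply Rabs_le; lra]. }
  set (u := Rabs (clamp a)); set (v := Rabs (clamp b)).
  pose proof (Hrange a) as Hu; pose proof (Hrange b) as Hv; fold u in Hu; fold v in Hv.
  apply Rle_trans with (Rabs (u - v)).
  - replace (u ^ 2 - u ^ 3 - (v ^ 2 - v ^ 3)) with ((u - v) * (u + v - u * u - u * v - v * v))
      by ring.
    rewrite Rabs_mult; apply Rle_trans with (Rabs (u - v) * 1); [|lra].
    apply Rmult_le_compat_l; [apply Rabs_pos | apply Rabs_le; nra].
  - eapply Rle_trans; [apply Rabs_triang_inv2 | apply clamp_lip].
Qed.

Definition signed_sq (s : R) : R := clamp s * Rabs (clamp s).

Definition jump (s : R) : R :=
  if Rle_dec 1 s then 1 else if Rle_dec s (-1) then -1 else 0.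

Lemma signed_sq_le a b : a <= b -> signed_sq a <= signed_sq b.
Proof.
  intros H; unfold signed_sq; pose proof (clamp_le a b H).
  unfold Rabs; repeat destruct Rcase_abs; nra.
Qed.

Lemma signed_sq_abs_le s : Rabs (signed_sq s) <= 1.
Proof.
  unfold signed_sq; pose proof (clamp_bounds s).
  rewrite Rabs_mult, Rabs_Rabsolu.
  assert (Rabs (clamp s) <= 1) by (apply Rabs_le; lra).
  pose proof (Rabs_pos (clamp s)); nra.
Qed.

Lemma jump_le a b : a <= b -> jump a <= jump b.
Proof. unfold jump; repeat destruct Rle_dec; lra. Qed.

Lemma jump_abs_le s : Rabs (jump s) <= 1.
Proof. unfold jump; repeat destruct Rle_dec; apply Rabs_le; lra. Qed.

Lemma signed_sq_in s : -1 < s < 1 -> signed_sq s = s * Rabs s /\ jump s = 0.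
Proof.
  intros; unfold signed_sq, jump; rewrite clamp_id by lra.
  split; [reflexivity | repeat destruct Rle_dec; lra].
Qed.

Lemma signed_sq_out s : 1 <= Rabs s -> signed_sq s = jump s.
Proof.
  intros Hs; unfold signed_sq, jump.
  destruct (clamp_out s Hs) as [[-> H]|[-> H]];
    rewrite ?Rabs_R1, ?Rabs_m1; repeat destruct Rle_dec; lra.
Qed.

Lemma indicator_frac_sq a b D :
  (if Z.eqb (Int_part a - Int_part b) D then (frac_part a - frac_part b) ^ 2 else 0)
  = bump (a - b - IZR D)
    + (signed_sq (a - b - IZR D) - jump (a - b - IZR D)) * (frac_part a - frac_part b).
Proof.
  pose proof (base_fp a); pose proof (base_fp b).
  set (k := (Int_part a - Int_part b - D)%Z).
  set (t := frac_part a - frac_part b).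
  assert (Hs : a - b - IZR D = IZR k + t).
  { unfold k, t, frac_part; rewrite !minus_IZR; ring. }
  rewrite Hs; assert (Ht : -1 < t < 1) by (unfold t; lra).
  destruct (Z.eqb_spec (Int_part a - Int_part b) D) as [E|E].
  { replace k with 0%Z by lia; rewrite Rplus_0_l.
    destruct (signed_sq_in t Ht) as [-> ->]; rewrite bump_in by lra.
    rewrite <- (pow2_abs t); unfold Rabs; destruct Rcase_abs; ring. }
  destruct (Rle_dec 1 (Rabs (IZR k + t))) as [Hout|Hin].
  { rewrite bump_out, signed_sq_out by exact Hout; ring. }
  apply Rnot_le_lt, Rabs_lt_between in Hin.
  assert (Hk : k = 1%Z \/ k = (-1)%Z).
  { assert (-2 < IZR k < 2) as [H1 H2] by lra.
    apply lt_IZR in H1; apply lt_IZR in H2; lia. }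
  destruct Hk as [-> | ->]; simpl IZR.
  - destruct (signed_sq_in (1 + t)) as [-> ->]; [lra|].
    rewrite bump_pos, Rabs_pos_eq by lra; ring.
  - destruct (signed_sq_in (-1 + t)) as [-> ->]; [lra|].
    rewrite bump_neg, Rabs_left1 by lra; ring.
Qed.

Lemma sum_n_m_Sm_R (a : nat -> R) n m :
  (n <= S m)%nat -> sum_n_m a n (S m) = sum_n_m a n m + a (S m).
Proof. intros; rewrite sum_n_Sm by lia; reflexivity. Qed.

(* [sum_n_m_ext] stated at type [R] rather than at the carrier of [R_AbelianMonoid],
   so that its premises can be discharged by [ring]. *)
Lemma sum_n_m_ext_R (a b : nat -> R) n m :
  (forall k, a k = b k) -> sum_n_m a n m = sum_n_m b n m.
Proof. exact (sum_n_m_ext a b n m). Qed.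

Lemma sum_n_m_minus_R (a b : nat -> R) n m :
  sum_n_m (fun k => a k - b k) n m = sum_n_m a n m - sum_n_m b n m.
Proof.
  pose proof (sum_n_m_plus (G := R_AbelianMonoid) (fun k => a k - b k) b n m) as H.
  rewrite (sum_n_m_ext _ a) in H by (intros; unfold plus; simpl; ring).
  unfold plus in H; simpl in H; lra.
Qed.

Lemma sum_n_m_abs_le (a b : nat -> R) n m :
  (forall k, (n <= k <= m)%nat -> Rabs (a k) <= b k) ->
  Rabs (sum_n_m a n m) <= sum_n_m b n m.
Proof.
  intros Hab; induction m as [|m IH].
  - destruct n as [|n].
    + rewrite !sum_n_n; apply Hab; lia.
    + rewrite !sum_n_m_zero by lia; change (Rabs 0 <= 0); rewrite Rabs_R0; lra.
  - destruct (Nat.le_gt_cases n (S m)) as [Hn|Hn].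
    + destruct (Nat.eq_dec n (S m)) as [->|Hn'].
      * rewrite !sum_n_n; apply Hab; lia.
      * rewrite !sum_n_m_Sm_R by lia.
        eapply Rle_trans; [apply Rabs_triang|].
        apply Rplus_le_compat; [apply IH; intros; apply Hab; lia | apply Hab; lia].
    + rewrite !sum_n_m_zero by lia; change (Rabs 0 <= 0); rewrite Rabs_R0; lra.
Qed.

(* Summation by parts: the sum telescopes up to the variation of [G], which is
   at most [2] for a monotone [G] with values in [-1, 1]. *)
Lemma abel_bound (G u : nat -> R) N :
  (forall n, (1 <= n)%nat -> G (S n) <= G n) -> (forall n, Rabs (G n) <= 1) ->
  (forall n, 0 <= u n <= 1) ->
  Rabs (sum_n_m (fun n => G n * (u n - u (S n))) 1 N) <= 4.
Proof.
  intros HG HGb Hu.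
  assert (Hpart : forall M, (1 <= M)%nat ->
    let T := sum_n_m (fun n => G n * (u n - u (S n))) 1 M in
    G 1%nat * u 1%nat - G M * u (S M) + (G M - G 1%nat) <= T
    <= G 1%nat * u 1%nat - G M * u (S M)).
  { intros M HM; induction HM as [|M HM IH]; cbv zeta in *.
    - rewrite sum_n_n; lra.
    - rewrite sum_n_m_Sm_R by lia.
      pose proof (HG M HM); pose proof (Hu (S M)); split; nra. }
  destruct N as [|N].
  - rewrite sum_n_m_zero by lia; change (Rabs 0 <= 4); rewrite Rabs_R0; lra.
  - specialize (Hpart (S N) ltac:(lia)); cbv zeta in Hpart.
    pose proof (HGb 1%nat) as H1; pose proof (HGb (S N)) as H2.
    apply Rabs_le_between in H1; apply Rabs_le_between in H2.
    pose proof (Hu 1%nat); pose proof (Hu (S (S N))).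
    apply Rabs_le_between; split; nra.
Qed.

(* The first index with [a (S n) <= K] has [a n <= c K], and the sum telescopes
   from there on. *)
Lemma telescoping_tail_bound (a : nat -> R) c K N :
  (forall n, (1 <= n)%nat -> 0 <= a n) -> (forall n, (1 <= n)%nat -> a (S n) <= a n) ->
  (forall n, (1 <= n)%nat -> a n <= c * a (S n)) -> 0 <= c -> 0 <= K ->
  sum_n_m (fun n => if Rle_dec (a (S n)) K then a n - a (S n) else 0) 1 N <= c * K.
Proof.
  intros Hpos Hdec Hratio Hc HK.
  assert (Hpart : forall M,
    sum_n_m (fun n => if Rle_dec (a (S n)) K then a n - a (S n) else 0) 1 M
    <= Rmax 0 (c * K - a (S M))).
  { induction M as [|M IH].
    - rewrite sum_n_m_zero by lia; apply Rmax_l.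
    - rewrite sum_n_m_Sm_R by lia.
      pose proof (Hratio (S M) ltac:(lia)); pose proof (Hdec (S M) ltac:(lia)).
      revert IH; unfold Rmax; repeat destruct Rle_dec; intros; nra. }
  eapply Rle_trans; [apply Hpart|].
  pose proof (Hpos (S N) ltac:(lia)); unfold Rmax; destruct Rle_dec; nra.
Qed.

(** * The integral of the profile *)

Lemma div_le_div_l x u v : 0 <= x -> 0 < u -> u <= v -> x / v <= x / u.
Proof.
  intros; unfold Rdiv; apply Rmult_le_compat_l; [lra | apply Rinv_le_contravar; lra].
Qed.

Lemma le_sqrt_iff_sq a b : 0 <= a -> 0 <= b -> (a <= sqrt b <-> a * a <= b).
Proof.
  intros Ha Hb; split; intros H.
  - rewrite <- (sqrt_sqrt b Hb); apply Rmult_le_compat; lra.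
  - rewrite <- (sqrt_square a Ha); apply sqrt_le_1_alt; exact H.
Qed.

Lemma sqrt_le_iff_sq a b : 0 <= a -> 0 <= b -> (sqrt a <= b <-> a <= b * b).
Proof.
  intros Ha Hb; split; intros H.
  - rewrite <- (sqrt_sqrt a Ha); pose proof (sqrt_pos a); apply Rmult_le_compat; lra.
  - rewrite <- (sqrt_square b Hb); apply sqrt_le_1_alt; exact H.
Qed.

Lemma sq_mul_sqrt z m : 0 <= m -> z * sqrt m * (z * sqrt m) = m * (z * z).
Proof. intros Hm; rewrite <- (sqrt_sqrt m Hm) at 3; ring. Qed.

Lemma le_sqrt_div_iff x m z : 0 < x -> 0 < m -> 0 < z ->
  (z <= sqrt x / sqrt m <-> m <= x / (z * z)).
Proof.
  intros Hx Hm Hz; pose proof (sqrt_lt_R0 m Hm).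
  rewrite <- (Rle_div_r z), <- (Rle_div_r m), le_sqrt_iff_sq, sq_mul_sqrt by nra.
  reflexivity.
Qed.

Lemma sqrt_div_le_iff x m z : 0 < x -> 0 < m -> 0 < z ->
  (sqrt x / sqrt m <= z <-> x / (z * z) <= m).
Proof.
  intros Hx Hm Hz; pose proof (sqrt_lt_R0 m Hm).
  rewrite (Rle_div_l (sqrt x)), (Rle_div_l x), sqrt_le_iff_sq by nra.
  rewrite sq_mul_sqrt by lra; reflexivity.
Qed.

Lemma sqrt_div_sqrt_le x m m' : 0 < m -> m <= m' -> sqrt x / sqrt m' <= sqrt x / sqrt m.
Proof.
  intros; apply div_le_div_l; [apply sqrt_pos | apply sqrt_lt_R0 | apply sqrt_le_1_alt]; lra.
Qed.

Lemma sqrt_le_succ x : 0 <= x -> sqrt x <= x + 1.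
Proof. intros Hx; apply sqrt_le_iff_sq; nra. Qed.

Definition profile (x e z : R) : R := bump (x / (z * z) - e).

Lemma bump_continuous s : continuity_pt bump s.
Proof.
  intros eps Heps; exists eps; split; [exact Heps|].
  intros y [_ Hy]; simpl in *; unfold R_dist in *.
  eapply Rle_lt_trans; [apply bump_lip | exact Hy].
Qed.

Lemma profile_continuous x e z : z <> 0 -> continuous (profile x e) z.
Proof.
  intros Hz; apply continuity_pt_filterlim.
  apply (continuity_pt_comp (fun z => x / (z * z) - e) bump); [|apply bump_continuous].
  apply continuity_pt_minus; [|apply continuity_pt_const; intros ? ?; reflexivity].
  apply continuity_pt_div;
    [apply continuity_pt_const; intros ? ?; reflexivity
    | apply continuity_pt_mult; apply continuity_pt_id
    | intros H; apply Rmult_integral in H; tauto].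
Qed.

Lemma ex_RInt_profile x e a b : 0 < a -> 0 < b -> ex_RInt (profile x e) a b.
Proof.
  intros Ha Hb; apply (ex_RInt_continuous (V := R_CompleteNormedModule)).
  intros z [Hz _]; apply profile_continuous.
  assert (0 < Rmin a b) by (unfold Rmin; destruct Rle_dec; lra); lra.
Qed.

Lemma RInt_profile_zero x e a b : 0 < a <= b ->
  (forall z, a <= z <= b -> 1 <= Rabs (x / (z * z) - e)) ->
  RInt (profile x e) a b = 0 :> R.
Proof.
  intros Hab Hout.
  apply Rabs_eq_0, Rle_antisym; [|apply Rabs_pos].
  apply Rle_trans with ((b - a) * 0); [|lra].
  apply abs_RInt_le_const; [lra | apply ex_RInt_profile; lra|].
  intros z Hz; unfold profile; rewrite bump_out by auto; rewrite Rabs_R0; lra.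
Qed.

Definition prim_pos (x e z : R) : R :=
  x ^ 3 / (5 * z ^ 5) - (1 + 3 * e) * x ^ 2 / (3 * z ^ 3) + (2 * e + 3 * e ^ 2) * x / z
  + e ^ 2 * (1 + e) * z.

Definition prim_neg (x e z : R) : R :=
  - x ^ 3 / (5 * z ^ 5) - (1 - 3 * e) * x ^ 2 / (3 * z ^ 3) - (3 * e ^ 2 - 2 * e) * x / z
  + e ^ 2 * (1 - e) * z.

Lemma RInt_profile_pos x e a b : 0 < a <= b ->
  (forall z, a <= z <= b -> 0 <= x / (z * z) - e <= 1) ->
  RInt (profile x e) a b = prim_pos x e b - prim_pos x e a :> R.
Proof.
  intros Hab Hz; apply is_RInt_unique.
  apply (is_RInt_derive (V := R_CompleteNormedModule) (prim_pos x e)).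
  - intros z Hz'; rewrite Rmin_left, Rmax_right in Hz' by lra.
    unfold profile; rewrite bump_pos by (apply Hz; exact Hz').
    unfold prim_pos; auto_derive.
    + repeat split; apply Rgt_not_eq; repeat apply Rmult_lt_0_compat; lra.
    + field; lra.
  - intros z Hz'; apply profile_continuous; rewrite Rmin_left in Hz' by lra; lra.
Qed.

Lemma RInt_profile_neg x e a b : 0 < a <= b ->
  (forall z, a <= z <= b -> -1 <= x / (z * z) - e <= 0) ->
  RInt (profile x e) a b = prim_neg x e b - prim_neg x e a :> R.
Proof.
  intros Hab Hz; apply is_RInt_unique.
  apply (is_RInt_derive (V := R_CompleteNormedModule) (prim_neg x e)).
  - intros z Hz'; rewrite Rmin_left, Rmax_right in Hz' by lra.
    unfold profile; rewrite bump_neg by (apply Hz; exact Hz').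
    unfold prim_neg; auto_derive.
    + repeat split; apply Rgt_not_eq; repeat apply Rmult_lt_0_compat; lra.
    + field; lra.
  - intros z Hz'; apply profile_continuous; rewrite Rmin_left in Hz' by lra; lra.
Qed.

Definition prim_pos_coef (e m : R) : R :=
  m ^ 2 / 5 - (1 + 3 * e) * m / 3 + (2 * e + 3 * e ^ 2) + e ^ 2 * (1 + e) / m.

Definition prim_neg_coef (e m : R) : R :=
  - m ^ 2 / 5 - (1 - 3 * e) * m / 3 - (3 * e ^ 2 - 2 * e) + e ^ 2 * (1 - e) / m.

Lemma prim_pos_sqrt x e m : 0 < x -> 0 < m ->
  prim_pos x e (sqrt x / sqrt m) = sqrt x * sqrt m * prim_pos_coef e m.
Proof.
  intros Hx Hm; unfold prim_pos, prim_pos_coef.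
  pose proof (sqrt_lt_R0 x Hx); pose proof (sqrt_lt_R0 m Hm).
  pose proof (sqrt_sqrt x (Rlt_le _ _ Hx)); pose proof (sqrt_sqrt m (Rlt_le _ _ Hm)).
  set (sx := sqrt x) in *; set (r := sqrt m) in *.
  replace x with (sx * sx); replace m with (r * r); field; lra.
Qed.

Lemma prim_neg_sqrt x e m : 0 < x -> 0 < m ->
  prim_neg x e (sqrt x / sqrt m) = sqrt x * sqrt m * prim_neg_coef e m.
Proof.
  intros Hx Hm; unfold prim_neg, prim_neg_coef.
  pose proof (sqrt_lt_R0 x Hx); pose proof (sqrt_lt_R0 m Hm).
  pose proof (sqrt_sqrt x (Rlt_le _ _ Hx)); pose proof (sqrt_sqrt m (Rlt_le _ _ Hm)).
  set (sx := sqrt x) in *; set (r := sqrt m) in *.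
  replace x with (sx * sx); replace m with (r * r); field; lra.
Qed.

Lemma RInt_profile_head x e : 0 < x -> 0 <= e ->
  Rabs (RInt (profile x e) 1 (sqrt x / sqrt (e + 1))) <= 1.
Proof.
  intros Hx He.
  assert (Hy : 0 < sqrt x / sqrt (e + 1))
    by (apply Rdiv_lt_0_compat; apply sqrt_lt_R0; lra).
  destruct (Rle_dec (sqrt x / sqrt (e + 1)) 1) as [Hle|Hgt].
  - rewrite <- opp_RInt_swap by (apply ex_RInt_profile; lra).
    change (Rabs (- RInt (profile x e) (sqrt x / sqrt (e + 1)) 1) <= 1); rewrite Rabs_Ropp.
    apply Rle_trans with ((1 - sqrt x / sqrt (e + 1)) * 1); [|lra].
    apply abs_RInt_le_const; [lra | apply ex_RInt_profile; lra |].
    intros; apply bump_abs_le.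
  - rewrite RInt_profile_zero; [rewrite Rabs_R0; lra | lra |].
    intros z [Hz1 Hz2]; apply le_sqrt_div_iff in Hz2; try lra.
    rewrite Rabs_pos_eq; lra.
Qed.

Lemma RInt_profile_upper x e : 0 < x -> 0 < e ->
  RInt (profile x e) (sqrt x / sqrt (e + 1)) (sqrt x / sqrt e)
  = sqrt x * (sqrt e * prim_pos_coef e e - sqrt (e + 1) * prim_pos_coef e (e + 1)) :> R.
Proof.
  intros Hx He.
  rewrite RInt_profile_pos.
  - rewrite !prim_pos_sqrt by lra; ring.
  - split; [apply Rdiv_lt_0_compat; apply sqrt_lt_R0; lra | apply sqrt_div_sqrt_le; lra].
  - intros z [Hz1 Hz2].
    assert (0 < z) by (eapply Rlt_le_trans; [|exact Hz1];
                      apply Rdiv_lt_0_compat; apply sqrt_lt_R0; lra).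
    apply le_sqrt_div_iff in Hz2; apply sqrt_div_le_iff in Hz1; lra.
Qed.

Lemma prim_neg_one_abs_le x Z : 0 < x -> x + 1 <= Z -> Rabs (prim_neg x 1 Z) <= 2.
Proof.
  intros Hx HZ.
  assert (Hq : 0 <= x / Z <= 1) by (split; [apply Rdiv_le_0_compat | apply Rle_div_l]; lra).
  assert (Hw : 0 < / Z <= 1).
  { split; [apply Rinv_0_lt_compat; lra | rewrite <- Rinv_1; apply Rinv_le_contravar; lra]. }
  replace (prim_neg x 1 Z)
    with (- (x / Z) ^ 3 * (/ Z) ^ 2 / 5 + 2 * (x / Z) ^ 2 * / Z / 3 - x / Z)
    by (unfold prim_neg; field; lra).
  set (q := x / Z) in *; set (w := / Z) in *.
  assert (0 <= q ^ 2 <= 1 /\ 0 <= q ^ 3 <= 1) by (split; split; nra).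
  assert (0 <= w ^ 2 <= 1) by (split; nra).
  apply Rabs_le_between; split; nra.
Qed.

Lemma RInt_profile_lower x e Z : 2 <= e -> 0 < x -> x + 1 <= Z ->
  RInt (profile x e) (sqrt x / sqrt e) Z
  = sqrt x * (sqrt (e - 1) * prim_neg_coef e (e - 1) - sqrt e * prim_neg_coef e e) :> R.
Proof.
  intros He Hx HZ.
  set (y0 := sqrt x / sqrt e); set (y2 := sqrt x / sqrt (e - 1)).
  assert (Hy0 : 0 < y0) by (apply Rdiv_lt_0_compat; apply sqrt_lt_R0; lra).
  assert (Hy02 : y0 <= y2) by (apply sqrt_div_sqrt_le; lra).
  assert (Hy2 : y2 <= Z).
  { apply Rle_trans with (sqrt x / sqrt 1); [apply sqrt_div_sqrt_le; lra|].
    rewrite sqrt_1, Rdiv_1_r; pose proof (sqrt_le_succ x); lra. }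
  rewrite <- (RInt_Chasles (profile x e) y0 y2 Z) by (apply ex_RInt_profile; lra).
  rewrite (RInt_profile_zero x e y2 Z).
  2: lra.
  2: { intros z [Hz _]; apply sqrt_div_le_iff in Hz; [|lra..].
       rewrite Rabs_left1; lra. }
  rewrite (RInt_profile_neg x e y0 y2); [unfold y0, y2; rewrite !prim_neg_sqrt by lra| lra |].
  - change (plus ?a 0) with (a + 0); ring.
  - intros z [Hz1 Hz2]; assert (0 < z) by lra.
    apply sqrt_div_le_iff in Hz1; apply le_sqrt_div_iff in Hz2; lra.
Qed.

(* For [d = 1] the integrand does not vanish for large [z]; truncating at [Z] costs
   [prim_neg x 1 Z], which is bounded. *)
Lemma RInt_profile_tail x d e Z : (1 <= d)%nat -> e = INR d -> 0 < x -> x + 1 <= Z ->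
  Rabs (RInt (profile x e) (sqrt x / sqrt e) Z
        - sqrt x * (sqrt (e - 1) * prim_neg_coef e (e - 1) - sqrt e * prim_neg_coef e e)) <= 2.
Proof.
  intros Hd -> Hx HZ.
  destruct (Nat.eq_dec d 1) as [->|Hd2].
  - change (INR 1) with 1; rewrite Rminus_diag, sqrt_0.
    rewrite RInt_profile_neg.
    + rewrite prim_neg_sqrt by lra.
      replace (_ - _) with (prim_neg x 1 Z) by ring.
      apply prim_neg_one_abs_le; lra.
    + rewrite sqrt_1, Rdiv_1_r; pose proof (sqrt_lt_R0 x Hx); pose proof (sqrt_le_succ x); lra.
    + intros z [Hz _].
      assert (0 < z) by (rewrite sqrt_1, Rdiv_1_r in Hz; pose proof (sqrt_lt_R0 x Hx); lra).
      apply sqrt_div_le_iff in Hz; [|lra..].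
      assert (0 <= x / (z * z)) by (apply Rdiv_le_0_compat; nra); lra.
  - assert (2 <= INR d) by (apply (le_INR 2); lia).
    rewrite RInt_profile_lower, Rminus_diag, Rabs_R0 by lra; lra.
Qed.

(* For [e = 1] the term [prim_neg_coef e (e - 1)] contains a division by [0], harmless
   because it is multiplied by [sqrt 0 = 0]. *)
Lemma vartheta_prim_coef d e : (1 <= d)%nat -> e = INR d ->
  vartheta d = sqrt e * prim_pos_coef e e - sqrt (e + 1) * prim_pos_coef e (e + 1)
             + sqrt (e - 1) * prim_neg_coef e (e - 1) - sqrt e * prim_neg_coef e e.
Proof.
  intros Hd He; unfold vartheta, prim_pos_coef, prim_neg_coef; cbv zeta; rewrite <- He.
  assert (1 <= e) by (subst; apply (le_INR 1); exact Hd).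
  destruct (Req_dec e 1) as [->|He1].
  - rewrite Rminus_diag, sqrt_0, !Rmult_0_l; field.
  - field; lra.
Qed.

Lemma RInt_profile_approx x d Z : (1 <= d)%nat -> 0 < x -> x + 1 <= Z ->
  Rabs (RInt (profile x (INR d)) 1 Z - vartheta d * sqrt x) <= 3.
Proof.
  intros Hd Hx HZ.
  assert (He : 1 <= INR d) by (apply (le_INR 1); exact Hd).
  set (e := INR d) in *.
  assert (Hy : 0 < sqrt x / sqrt (e + 1)) by (apply Rdiv_lt_0_compat; apply sqrt_lt_R0; lra).
  assert (Hy' : 0 < sqrt x / sqrt e) by (apply Rdiv_lt_0_compat; apply sqrt_lt_R0; lra).
  rewrite <- (RInt_Chasles (profile x e) 1 (sqrt x / sqrt (e + 1)) Z),
    <- (RInt_Chasles (profile x e) (sqrt x / sqrt (e + 1)) (sqrt x / sqrt e) Z)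
    by (apply ex_RInt_profile; lra).
  rewrite RInt_profile_upper by lra; rewrite (vartheta_prim_coef d e Hd eq_refl).
  pose proof (RInt_profile_head x e Hx ltac:(lra)) as Hhead.
  pose proof (RInt_profile_tail x d e Z Hd eq_refl Hx HZ) as Htail.
  apply Rabs_le_between in Hhead; apply Rabs_le_between in Htail.
  change plus with Rplus; apply Rabs_le_between; split; nra.
Qed.

(** * Comparison of the sum with the integral *)

(* [x / (n (n + 1))] lies between the extreme values of [x / z^2] on [n, n + 1], and
   both bumps vanish once [x / (n + 1)^2] exceeds [e + 1]. *)
Lemma RInt_profile_step x e n : 0 < x -> (1 <= n)%nat ->
  Rabs (RInt (profile x e) (INR n) (INR (S n)) - bump (x / INR n - x / INR (S n) - e))
  <= (if Rle_dec (x / (INR (S n) * INR (S n))) (e + 1)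
      then x / (INR n * INR n) - x / (INR (S n) * INR (S n)) else 0).
Proof.
  intros Hx Hn.
  assert (Hp : 1 <= INR n) by (apply (le_INR 1); exact Hn).
  rewrite S_INR; set (p := INR n) in *.
  replace (x / p - x / (p + 1)) with (x / (p * (p + 1))) by (field; lra).
  set (c := bump (x / (p * (p + 1)) - e)).
  set (M := if Rle_dec _ _ then _ else _).
  assert (Hint := is_RInt_minus (V := R_NormedModule) _ _ p (p + 1) _ _
    (RInt_correct (V := R_CompleteNormedModule) _ _ _ (ex_RInt_profile x e p (p + 1)
       ltac:(lra) ltac:(lra)))
    (is_RInt_const p (p + 1) c)).
  assert (Hpp : p <= p + 1) by lra.
  apply (norm_RInt_le_const _ _ _ _ M Hpp) in Hint.
  - change (Rabs (RInt (profile x e) p (p + 1) - (p + 1 - p) * c) <= (p + 1 - p) * M) in Hint.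
    replace (p + 1 - p) with 1 in Hint by ring; rewrite !Rmult_1_l in Hint; exact Hint.
  - intros z Hz; change (Rabs (profile x e z - c) <= M).
    assert (Hlo : x / ((p + 1) * (p + 1)) <= x / (z * z))
      by (apply div_le_div_l; nra).
    assert (Hhi : x / (z * z) <= x / (p * p)) by (apply div_le_div_l; nra).
    assert (Hmid : x / ((p + 1) * (p + 1)) <= x / (p * (p + 1)) <= x / (p * p))
      by (split; apply div_le_div_l; nra).
    unfold M, c, profile; destruct Rle_dec.
    + eapply Rle_trans; [apply bump_lip | apply Rabs_le_between; lra].
    + rewrite !bump_out by (rewrite Rabs_pos_eq; lra); rewrite Rminus_0_r, Rabs_R0; lra.
Qed.

Lemma sum_RInt_unit (f : R -> R) N :
  (forall a b, 1 <= a -> 1 <= b -> ex_RInt f a b) ->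
  sum_n_m (fun n => RInt f (INR n) (INR (S n)) : R) 1 N = RInt f 1 (INR (S N)).
Proof.
  intros Hf; induction N as [|N IH].
  - rewrite sum_n_m_zero, RInt_point by lia; reflexivity.
  - rewrite sum_n_m_Sm_R, IH by lia.
    apply (RInt_Chasles (V := R_CompleteNormedModule)); apply Hf;
      rewrite ?S_INR; pose proof (pos_INR N); lra.
Qed.

Lemma sum_bump_RInt_profile x e N : 0 < x -> 0 <= e ->
  Rabs (sum_n_m (fun n => bump (x / INR n - x / INR (S n) - e)) 1 N
        - RInt (profile x e) 1 (INR (S N))) <= 4 * (e + 1).
Proof.
  intros Hx He.
  rewrite <- sum_RInt_unit by (intros; apply ex_RInt_profile; lra).
  rewrite Rabs_minus_sym, <- sum_n_m_minus_R.
  set (a := fun n => x / (INR n * INR n)).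
  eapply Rle_trans.
  - apply sum_n_m_abs_le with
      (b := fun n => if Rle_dec (a (S n)) (e + 1) then a n - a (S n) else 0).
    intros n Hn; apply RInt_profile_step; [lra | lia].
  - apply telescoping_tail_bound; [| | |lra|lra];
      intros n Hn; assert (Hp : 1 <= INR n) by (apply (le_INR 1); exact Hn);
      unfold a; rewrite ?S_INR.
    + apply Rdiv_le_0_compat; nra.
    + apply div_le_div_l; nra.
    + replace (4 * (x / ((INR n + 1) * (INR n + 1))))
        with (x / ((INR n + 1) * (INR n + 1) / 4)) by (field; lra).
      apply div_le_div_l; nra.
Qed.

Lemma consecutive_gap_le x n : 0 <= x -> (1 <= n)%nat ->
  x / INR (S n) - x / INR (S (S n)) <= x / INR n - x / INR (S n).
Proof.
  intros Hx Hn; assert (Hp : 1 <= INR n) by (apply (le_INR 1); exact Hn).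
  rewrite !S_INR.
  replace (x / INR n - x / (INR n + 1)) with (x / (INR n * (INR n + 1))) by (field; lra).
  replace (x / (INR n + 1) - x / (INR n + 1 + 1))
    with (x / ((INR n + 1) * (INR n + 1 + 1))) by (field; lra).
  apply div_le_div_l; nra.
Qed.

Lemma sum_correction_abs_le x e N : 0 < x ->
  Rabs (sum_n_m (fun n =>
          (signed_sq (x / INR n - x / INR (S n) - e) - jump (x / INR n - x / INR (S n) - e))
          * (frac_part (x / INR n) - frac_part (x / INR (S n)))) 1 N) <= 8.
Proof.
  intros Hx.
  set (s := fun n => x / INR n - x / INR (S n) - e).
  set (u := fun n => frac_part (x / INR n)).
  assert (Hu : forall n, 0 <= u n <= 1)
    by (intros n; pose proof (base_fp (x / INR n)); unfold u; lra).
  assert (Hs : forall n, (1 <= n)%nat -> s (S n) <= s n)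
    by (intros n Hn; unfold s; pose proof (consecutive_gap_le x n ltac:(lra) Hn); lra).
  rewrite (sum_n_m_ext_R _ (fun n => signed_sq (s n) * (u n - u (S n))
                                   - jump (s n) * (u n - u (S n))))
    by (intros n; unfold s, u; ring).
  rewrite sum_n_m_minus_R.
  pose proof (abel_bound (fun n => signed_sq (s n)) u N
    (fun n Hn => signed_sq_le _ _ (Hs n Hn)) (fun n => signed_sq_abs_le _) Hu) as H1.
  pose proof (abel_bound (fun n => jump (s n)) u N
    (fun n Hn => jump_le _ _ (Hs n Hn)) (fun n => jump_abs_le _) Hu) as H2.
  apply Rabs_le_between in H1; apply Rabs_le_between in H2.
  apply Rabs_le_between; lra.
Qed.

Lemma Qterm_decomp d x n :
  Qterm d x n
  = bump (x / INR n - x / INR (S n) - INR d)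
    + (signed_sq (x / INR n - x / INR (S n) - INR d) - jump (x / INR n - x / INR (S n) - INR d))
      * (frac_part (x / INR n) - frac_part (x / INR (S n))).
Proof. unfold Qterm; rewrite indicator_frac_sq, (INR_IZR_INZ d); reflexivity. Qed.

Lemma Int_part_small r : 0 <= r < 1 -> Int_part r = 0%Z.
Proof. intros; symmetry; apply Int_part_spec; simpl; lra. Qed.

Lemma Qterm_large_n d x n : (1 <= d)%nat -> 0 < x -> x < INR n -> Qterm d x n = 0.
Proof.
  intros Hd Hx Hn; unfold Qterm; rewrite S_INR.
  rewrite (Int_part_small (x / INR n)), (Int_part_small (x / (INR n + 1))).
  - destruct (Z.eqb_spec (0 - 0) (Z.of_nat d)); [lia | reflexivity].
  - split; [apply Rdiv_le_0_compat | apply Rlt_div_l]; lra.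
  - split; [apply Rdiv_le_0_compat | apply Rlt_div_l]; lra.
Qed.

Lemma Q_eq_sum d x N : (1 <= d)%nat -> 0 < x -> x <= INR N ->
  Q d x = sum_n_m (Qterm d x) 1 N.
Proof.
  intros Hd Hx HN; apply is_series_unique.
  enough (is_lim_seq (sum_n (fun k => Qterm d x (S k))) (sum_n_m (Qterm d x) 1 N)) by assumption.
  apply (is_lim_seq_ext_loc (fun _ => sum_n_m (Qterm d x) 1 N)); [|apply is_lim_seq_const].
  exists N; intros m Hm; unfold sum_n; rewrite sum_n_m_S.
  rewrite (sum_n_m_Chasles _ 1 N (S m)) by lia.
  rewrite (sum_n_m_ext_loc _ (fun _ => zero) (S N) (S m)), sum_n_m_const_zero.
  - symmetry; apply plus_zero_r.
  - intros k Hk; apply Qterm_large_n; [exact Hd | exact Hx |].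
    apply Rle_lt_trans with (INR N); [exact HN | apply lt_INR; lia].
Qed.

Lemma exists_nat_ge x : exists N : nat, x <= INR N.
Proof.
  destruct (archimed (Rabs x)) as [Hup _].
  exists (Z.to_nat (up (Rabs x))).
  assert (0 < IZR (up (Rabs x))) by (pose proof (Rabs_pos x); lra).
  rewrite INR_IZR_INZ, Z2Nat.id by (apply le_IZR; lra).
  pose proof (Rle_abs x); lra.
Qed.

Lemma Q_approx d x : (1 <= d)%nat -> 0 < x ->
  Rabs (Q d x - vartheta d * sqrt x) <= 4 * INR d + 15.
Proof.
  intros Hd Hx.
  destruct (exists_nat_ge x) as [N HN].
  assert (He : 0 <= INR d) by apply pos_INR.
  rewrite (Q_eq_sum d x N Hd Hx HN), (sum_n_m_ext_R _ _ _ _ (Qterm_decomp d x)).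
  rewrite (sum_n_m_plus (G := R_AbelianMonoid)); change plus with Rplus.
  pose proof (sum_bump_RInt_profile x (INR d) N Hx He) as Hbump.
  pose proof (RInt_profile_approx x d (INR (S N)) Hd Hx ltac:(rewrite S_INR; lra)) as Hint.
  pose proof (sum_correction_abs_le x (INR d) N Hx) as Hcorr.
  apply Rabs_le_between in Hbump; apply Rabs_le_between in Hint;
    apply Rabs_le_between in Hcorr.
  apply Rabs_le_between; lra.
Qed.

Theorem proposition10 :
  exists C : R, forall (d : nat) (x : R),
    (1 <= d)%nat -> 0 < x ->
    Rabs (Q d x - vartheta d * sqrt x) <= C * (INR d) ^ 2.
Proof.
  exists 19; intros d x Hd Hx.
  assert (1 <= INR d) by (apply (le_INR 1); exact Hd).
  eapply Rle_trans; [apply (Q_approx d x Hd Hx) | nra].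
Qed.
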